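(* Let $n\ge2$ and consider a line (path) on $n$ nodes, where the node at position $i$ initially has integer load $i$. Run any matching-based integral load-balancing algorithm against the following adversary: the graph is always a path on the $n$ nodes; in each round, after each pair of adjacent nodes in the matching exchanges load, the adversary swaps the two nodes of that pair if necessary so that the lighter one is at the smaller position (no other changes). Let $a_t[i]$ be the load of the node at position $i$ of the path at time $t$ ($a_1[i]=i$) and $p_t^k=\sum_{j=1}^k a_t[j]$ (with $p_t^0=0$). Then for all $t\ge1$ and all $k\in\{0,1,\dots,n\}$, $p_t^k\le p_1^k$.
   Context: Integral load balancing: loads are non-negative integers that remain integers, total load preserved. A matching-based algorithm: in each round, the pairs of nodes exchanging load form a matching of the current graph, and each matched pair redistributes its combined load between its two nodes as integers; unmatched nodes keep their load. Nodes may exchange information with all their neighbours each round. *)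

(* Positions on the path are 0-indexed: position p (0 <= p < n)
   corresponds to the paper's position p+1. A configuration is a function
   nat -> nat giving the load at each position (values at positions >= n are
   irrelevant). *)
From mathcomp Require Import all_boot all_order.
Set Implicit Arguments. Unset Strict Implicit. Unset Printing Implicit Defensive.

(* A matching of the path on n nodes, encoded by the set M of left endpoints:
   i \in M means edge {i, i+1} is matched; edges must exist and be disjoint. *)
Definition path_matching (n : nat) (M : pred nat) : Prop :=
  forall i, M i -> i.+1 < n /\ ~~ M i.+1.

(* One round against the adversary: each matched pair (i, i+1) redistributes
   its combined load as integers (arbitrarily, as chosen by the algorithm),
   then the adversary places the lighter node at the smaller position;
   unmatched nodes keep their load. *)
Definition adversary_round (n : nat) (a a' : nat -> nat) : Prop :=
  exists M : pred nat, path_matching n M /\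
    (forall i, M i -> a' i + a' i.+1 = a i + a i.+1 /\ a' i <= a' i.+1) /\
    (forall j, j < n -> ~~ M j -> (forall i, M i -> i.+1 <> j) -> a' j = a j).

(* prefix sum p^k = a[1] + ... + a[k] (paper's 1-indexing) *)
Definition prefix_load (a : nat -> nat) (k : nat) : nat := \sum_(i < k) a i.

(* The invariant is p^k <= 1 + 2 + ... + k = 'C(k+1, 2), with equality at the
   start.  A round leaves p^k unchanged unless the cut between positions k-1
   and k splits a matched pair (k-1, k); in that case the sorted exchange puts
   at most half of the pair's load at position k-1, so 2 p'^k <= p^(k-1) +
   p^(k+1), and the discrete convexity of k |-> 'C(k+1, 2) gives the bound. *)
From mathcomp Require Import all_boot all_order.
From mathcomp Require Import zify.

Set Implicit Arguments.
Unset Strict Implicit.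

Definition matching_cut (M : pred nat) (k : nat) : Prop :=
  forall i, M i -> i.+1 <> k.

Lemma prefix_loadS (a : nat -> nat) k :
  prefix_load a k.+1 = prefix_load a k + a k.
Proof. by rewrite /prefix_load big_ord_recr. Qed.

Lemma prefix_load_succ_id (a : nat -> nat) k :
  (forall i, i < k -> a i = i.+1) -> prefix_load a k = 'C(k.+1, 2).
Proof.
elim: k => [|k IHk] a_id; first by rewrite /prefix_load big_ord0.
rewrite prefix_loadS IHk => [|i i_lt]; last by rewrite a_id // ltnW.
by rewrite a_id // [in RHS]binS bin1.
Qed.

Lemma bin2_convex k : 'C(k, 2) + 'C(k.+2, 2) = ('C(k.+1, 2)).*2.+1.
Proof. rewrite !binS !bin1 bin0; lia. Qed.

Section AdversaryRound.

Variables (n : nat) (M : pred nat) (a a' : nat -> nat).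
Hypothesis M_matching : path_matching n M.
Hypothesis pair_sum : forall i, M i -> a' i + a' i.+1 = a i + a i.+1.
Hypothesis unmatched_fixed :
  forall j, j < n -> ~~ M j -> matching_cut M j -> a' j = a j.

Lemma matching_cut_left i : M i -> matching_cut M i.
Proof. by move=> Mi j Mj ji; have [_] := M_matching Mj; rewrite ji Mi. Qed.

Lemma prefix_load_round_cut k :
  k <= n -> matching_cut M k -> prefix_load a' k = prefix_load a k.
Proof.
elim/ltn_ind: k => -[|[|l]] IHk k_le cut_k; first by rewrite /prefix_load !big_ord0.
  have M0 : ~~ M 0 by apply/negP => /cut_k.
  by rewrite !prefix_loadS /prefix_load !big_ord0 unmatched_fixed.
have Ml1 : ~~ M l.+1 by apply/negP => /cut_k.
case Ml: (M l).
  rewrite !prefix_loadS -!addnA pair_sum // IHk //; first lia.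
  exact: matching_cut_left.
have cut_l1 : matching_cut M l.+1 by move=> i Mi /succn_inj il; rewrite il Ml in Mi.
by rewrite (prefix_loadS a') (prefix_loadS a) IHk ?unmatched_fixed ?(ltnW k_le).
Qed.

Hypothesis pair_sorted : forall i, M i -> a' i <= a' i.+1.

Lemma prefix_load_round_split i :
  M i -> (prefix_load a' i.+1).*2 <= prefix_load a i + prefix_load a i.+2.
Proof.
move=> Mi; have [i1_lt _] := M_matching Mi.
have := pair_sum Mi; have := pair_sorted Mi.
rewrite !prefix_loadS prefix_load_round_cut //; [lia | lia | exact: matching_cut_left].
Qed.

Lemma prefix_load_round_bin2 :
  (forall k, k <= n -> prefix_load a k <= 'C(k.+1, 2)) ->
  forall k, k <= n -> prefix_load a' k <= 'C(k.+1, 2).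
Proof.
move=> bound [|i] i_lt; first by rewrite /prefix_load big_ord0.
case Mi: (M i); last first.
  rewrite prefix_load_round_cut ?bound // => j Mj /succn_inj ji.
  by rewrite ji Mi in Mj.
have [i1_lt _] := M_matching Mi.
have := prefix_load_round_split Mi; have := bin2_convex i.+1.
have := bound i (ltnW (ltnW i1_lt)); have := bound i.+2 i1_lt; lia.
Qed.

End AdversaryRound.

Lemma adversary_round_bin2 n (a a' : nat -> nat) :
  adversary_round n a a' ->
  (forall k, k <= n -> prefix_load a k <= 'C(k.+1, 2)) ->
  forall k, k <= n -> prefix_load a' k <= 'C(k.+1, 2).
Proof.
move=> [M [M_matching [pair_ok unmatched_fixed]]].
by apply: (prefix_load_round_bin2 M_matching _ unmatched_fixed) => i /pair_ok[].
Qed.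

Theorem lemma4 (n : nat) (a : nat -> nat -> nat) :
  2 <= n ->
  (forall i, i < n -> a 1 i = i.+1) ->
  (forall t, 1 <= t -> adversary_round n (a t) (a t.+1)) ->
  forall t k, 1 <= t -> k <= n -> prefix_load (a t) k <= prefix_load (a 1) k.
Proof.
move=> _ a1_id round t k t_ge1 k_le.
have init k' : k' <= n -> prefix_load (a 1) k' = 'C(k'.+1, 2).
  by move=> k'_le; apply: prefix_load_succ_id => i i_lt; rewrite a1_id ?(leq_trans i_lt).
rewrite init //; elim: t t_ge1 k k_le => [//|[|t] IHt] _ k k_le.
  by rewrite init.
exact: adversary_round_bin2 (round t.+1 isT) (IHt isT) k k_le.
Qed.
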